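(* Under the setup below, assume Conditions 1 and 2 hold and $p_\lambda$ is continuously differentiable on $(0,\infty)$. Let $\widehat\beta$ be a global minimizer of $L$ and $\delta=\widehat\beta-\beta_0$. On the event $\mathscr{E}=\{\|n^{-1}X^T\varepsilon\|_\infty\le\lambda_0/2\}$, $$n^{-1}\|X\delta\|_2^2+\lambda_0\|\widetilde\delta_2\|_1\le 7\lambda_0\|\widetilde\delta_1\|_1,$$ and consequently $\|\widetilde\delta_2\|_1\le7\|\widetilde\delta_1\|_1$, $\|\widetilde\delta_1\|_2\le 7\lambda_0s^{1/2}/\kappa^2$ and $\|\widetilde\delta_2\|_2\le 56\lambda_0 s^{1/2}/\kappa^2$, where $\kappa=\kappa(s,7)$.
   Context: Setup: linear model $y=X\beta_0+\varepsilon$ with $y\in\mathbb{R}^n$, deterministic design $X=(x_1,\dots,x_p)\in\mathbb{R}^{n\times p}$ with $\|x_j\|_2=n^{1/2}$ for all $j$, unknown $\beta_0\in\mathbb{R}^p$, noise $\varepsilon\in\mathbb{R}^n$. The support of $\beta_0$ is $\{1,\dots,s\}$: $\beta_0=(\widetilde\beta_{0,1}^T,0^T)^T$ with all $s$ entries of $\widetilde\beta_{0,1}$ nonzero. For $a\in\mathbb{R}^p$, $\widetilde a_1\in\mathbb{R}^s$ is its first $s$ components and $\widetilde a_2\in\mathbb{R}^{p-s}$ its remaining components. The penalty $p_\lambda:[0,\infty)\to[0,\infty)$, with $p_\lambda(0)=0$, is indexed by $\lambda\ge0$, and $p_\lambda(\infty)=\lim_{t\to\infty}p_\lambda(t)$.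 The objective is $L(\beta)=(2n)^{-1}\|y-X\beta\|_2^2+\lambda_0\|\beta\|_1+\sum_{j=1}^p p_\lambda(|\beta_j|)$ with $\lambda_0=c\{(\log p)/n\}^{1/2}$ for a fixed constant $c>0$. Condition 1: for some constant $\kappa_0>0$, $\min\{n^{-1/2}\|X\delta\|_2:\|\delta\|_2=1,\ \|\delta\|_0<2s\}\ge\kappa_0$, and $\kappa=\kappa(s,7)=\min\{n^{-1/2}\|X\delta\|_2/(\|\widetilde\delta_1\|_2\vee\|\widetilde\delta_2'\|_2):\ \delta\ne0,\ \|\widetilde\delta_2\|_1\le 7\|\widetilde\delta_1\|_1\}>0$, where $\widetilde\delta_2'$ is the subvector of $\widetilde\delta_2$ of its $s$ entries of largest absolute value. Condition 2: $p_\lambda$ is increasing and concave on $[0,\infty)$, $p_\lambda(t)\ge \tfrac12\{\lambda^2-(\lambda-t)_+^2\}$ on $[0,\lambda]$, $p_\lambda'\{(1-c_1)\lambda\}\le c_1\lambda$ for some $c_1\in[0,1)$, $-p_\lambda''$ is decreasing on $[0,(1-c_1)\lambda]$; moreover $p_\lambda'\{(1-c_1)\lambda\}\le\lambda_0/4$ and $\min_{1\le j\le s}|\beta_{0,j}|>\max\{(1-c_1)\lambda,\ 2\kappa_0^{-1}p_\lambda^{1/2}(\infty)\}$. *)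

From Stdlib Require Import Reals Lra Lia List.
Import ListNotations.
Open Scope R_scope.

(* Vectors in R^m are functions nat -> R; only indices 0..m-1 are used.
   Indices are 0-based: the paper's index j corresponds to j-1 here.     *)

Fixpoint sumR (m : nat) (f : nat -> R) : R :=
  match m with
  | O => 0
  | S k => sumR k f + f k
  end.

Definition sum_range (a b : nat) (f : nat -> R) : R :=
  sumR (b - a) (fun k => f (a + k)%nat).

Definition norm1_range (a b : nat) (v : nat -> R) : R := sum_range a b (fun j => Rabs (v j)).
Definition norm2_range (a b : nat) (v : nat -> R) : R := sqrt (sum_range a b (fun j => v j ^ 2)).

Definition norm0 (p : nat) (v : nat -> R) : nat :=
  length (filter (fun j => if Req_EM_T (v j) 0 then false else true) (seq 0 p)).

(* X : matrix n x p, X i j = entry (row i, column j);  (X b)_i *)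
Definition Xmul (p : nat) (X : nat -> nat -> R) (b : nat -> R) : nat -> R :=
  fun i => sumR p (fun j => X i j * b j).

Definition XTmul (n : nat) (X : nat -> nat -> R) (e : nat -> R) : nat -> R :=
  fun j => sumR n (fun i => X i j * e i).

Definition objL (n p : nat) (X : nat -> nat -> R) (y : nat -> R) (lam0 : R)
  (pl : R -> R) (b : nat -> R) : R :=
  / (2 * INR n) * sumR n (fun i => (y i - Xmul p X b i) ^ 2)
  + lam0 * sumR p (fun j => Rabs (b j))
  + sumR p (fun j => pl (Rabs (b j))).

(* S is a list of indices of s entries of largest absolute value of the
   subvector (v_s, ..., v_{p-1}) (i.e. the support of widetilde v_2'). *)
Definition top_s_set (s p : nat) (v : nat -> R) (S : list nat) : Prop :=
  NoDup S /\ length S = Nat.min s (p - s) /\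
  (forall j, In j S -> (s <= j < p)%nat) /\
  (forall j k, In j S -> (s <= k < p)%nat -> ~ In k S -> Rabs (v k) <= Rabs (v j)).

Definition sumsq_list (v : nat -> R) (S : list nat) : R :=
  fold_right (fun j acc => v j ^ 2 + acc) 0 S.

(* The set of ratios whose minimum is kappa(s,7). *)
Definition kappa_ratios (n p s : nat) (X : nat -> nat -> R) (r : R) : Prop :=
  exists (d : nat -> R) (S : list nat),
    (exists j, (j < p)%nat /\ d j <> 0) /\
    norm1_range s p d <= 7 * norm1_range 0 s d /\
    top_s_set s p d S /\
    r = (/ sqrt (INR n) * sqrt (sumR n (fun i => Xmul p X d i ^ 2)))
        / Rmax (norm2_range 0 s d) (sqrt (sumsq_list d S)).

Definition is_glb_R (E : R -> Prop) (m : R) : Prop :=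
  (forall x, E x -> m <= x) /\ (forall b, (forall x, E x -> b <= x) -> b <= m).

(* At a global minimizer, a coordinate with [0 < |b_j| < (1 - c1) lam] can be
   moved to [0] or to [sgn(b_j) (1 - c1) lam] without changing [L]: along that
   coordinate [L] is [x^2/2 - w x + p_lam(x)] up to a constant, and Condition 2
   forces [w = lam], which makes both endpoints minimal.  The excess
   [F(b) = n^-1 |X delta|^2 + lam0 |delta_2|_1 - 7 lam0 |delta_1|_1] is convex
   along this move (both endpoints lie on the same side of [beta0_j]), so
   [F <= 0] at every minimizer follows by induction on the number of such
   coordinates.  When there are none, the basic inequality [L(b) <= L(beta0)]
   on the event [E] bounds [F]: the slope bound [p_lam' <= lam0/4] beyond
   [(1 - c1) lam] controls the penalty on the support, and each missed true
   coordinate costs at most [p_lam(oo)], which the beta-min condition and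
   Condition 1 absorb.  The l2 bounds then follow from the definition of
   [kappa(s,7)] and the shifting inequality
   [|delta_2|_2^2 <= |delta_2'|_2^2 + |delta_2|_1^2 / s]. *)

From Stdlib Require Import Reals Lra Lia List Arith Permutation FunctionalExtensionality.
Import ListNotations.
Open Scope R_scope.

(** * Finite sums *)

Lemma sumR_ext m f g : (forall k, (k < m)%nat -> f k = g k) -> sumR m f = sumR m g.
Proof.
  induction m as [|m IH]; intros H; simpl; auto.
  rewrite IH by (intros; apply H; lia). rewrite (H m) by lia. auto.
Qed.

Lemma sumR_le m f g : (forall k, (k < m)%nat -> f k <= g k) -> sumR m f <= sumR m g.
Proof.
  induction m as [|m IH]; intros H; simpl; [lra|].
  assert (H1 := IH (fun k Hk => H k ltac:(lia))). assert (H2 := H m ltac:(lia)). lra.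
Qed.

Lemma sumR_add m f g : sumR m (fun k => f k + g k) = sumR m f + sumR m g.
Proof. induction m as [|m IH]; simpl; [lra|]. rewrite IH. lra. Qed.

Lemma sumR_sub m f g : sumR m (fun k => f k - g k) = sumR m f - sumR m g.
Proof. induction m as [|m IH]; simpl; [lra|]. rewrite IH. lra. Qed.

Lemma sumR_scal m c f : sumR m (fun k => c * f k) = c * sumR m f.
Proof. induction m as [|m IH]; simpl; [lra|]. rewrite IH. lra. Qed.

Lemma sumR_0 m : sumR m (fun _ => 0) = 0.
Proof. induction m; simpl; lra. Qed.

Lemma sumR_const m c : sumR m (fun _ => c) = INR m * c.
Proof. induction m as [|m IH]; simpl; [lra|]. rewrite IH. destruct m; simpl; lra. Qed.

Lemma sumR_nonneg m f : (forall k, (k < m)%nat -> 0 <= f k) -> 0 <= sumR m f.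
Proof. intros H. rewrite <- (sumR_0 m). apply sumR_le. auto. Qed.

Lemma sumR_sq_nonneg m f : 0 <= sumR m (fun k => f k ^ 2).
Proof. apply sumR_nonneg. intros. apply pow2_ge_0. Qed.

Lemma sumR_term_le m f k :
  (forall j, (j < m)%nat -> 0 <= f j) -> (k < m)%nat -> f k <= sumR m f.
Proof.
  induction m as [|m IH]; intros H Hk; [lia|]. simpl.
  assert (0 <= f m) by (apply H; lia).
  destruct (Nat.eq_dec k m) as [->|Hne].
  - assert (0 <= sumR m f) by (apply sumR_nonneg; intros; apply H; lia). lra.
  - assert (f k <= sumR m f) by (apply IH; [intros; apply H|]; lia). lra.
Qed.

Lemma sumR_app a b f : sumR (a + b) f = sumR a f + sumR b (fun k => f (a + k)%nat).
Proof.
  induction b as [|b IH]; simpl; [rewrite Nat.add_0_r; lra|].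
  rewrite Nat.add_succ_r. simpl. rewrite IH. lra.
Qed.

Lemma sumR_split s p f : (s <= p)%nat ->
  sumR p f = sumR s f + sumR (p - s) (fun k => f (s + k)%nat).
Proof. intros H. rewrite <- sumR_app. f_equal. lia. Qed.

Lemma sumR_single m f j : (j < m)%nat ->
  (forall k, (k < m)%nat -> k <> j -> f k = 0) -> sumR m f = f j.
Proof.
  induction m as [|m IH]; intros Hj H; [lia|]. simpl.
  destruct (Nat.eq_dec j m) as [->|Hne].
  - rewrite (sumR_ext m f (fun _ => 0)) by (intros; apply H; lia). rewrite sumR_0. lra.
  - rewrite IH, (H m) by (auto; lia). lra.
Qed.

Lemma sumR_swap n m (F : nat -> nat -> R) :
  sumR n (fun i => sumR m (fun j => F i j)) = sumR m (fun j => sumR n (fun i => F i j)).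
Proof.
  induction n as [|n IH]; simpl; [rewrite sumR_0; auto|].
  rewrite IH, <- sumR_add. auto.
Qed.

Lemma sumR_sq_le m f : (sumR m f) ^ 2 <= INR m * sumR m (fun k => f k ^ 2).
Proof.
  induction m as [|m IH]; [simpl; lra|].
  change (sumR (S m) f) with (sumR m f + f m).
  change (sumR (S m) (fun k => f k ^ 2)) with (sumR m (fun k => f k ^ 2) + f m ^ 2).
  rewrite S_INR.
  assert (HQ := sumR_sq_nonneg m f). assert (HM := pos_INR m).
  set (S := sumR m f) in *. set (Q := sumR m (fun k => f k ^ 2)) in *. set (M := INR m) in *.
  clearbody S Q M.
  destruct (Req_dec M 0) as [H0|H0]; [subst M; assert (S = 0) by nra; subst S; nra|].
  assert (HAMGM : M * (2 * S * f m) <= M * (Q + M * f m ^ 2))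
    by (assert (0 <= (S - M * f m) ^ 2) by apply pow2_ge_0; nra).
  assert (2 * S * f m <= Q + M * f m ^ 2) by (apply (Rmult_le_reg_l M); lra).
  nra.
Qed.

Lemma sqrt_add_le a b : 0 <= a -> 0 <= b -> sqrt (a + b) <= sqrt a + sqrt b.
Proof.
  intros Ha Hb.
  assert (Hsa := sqrt_sqrt a Ha). assert (Hsb := sqrt_sqrt b Hb).
  assert (0 <= sqrt a) by apply sqrt_pos. assert (0 <= sqrt b) by apply sqrt_pos.
  rewrite <- (sqrt_square (sqrt a + sqrt b)) by lra.
  apply sqrt_le_1_alt. nra.
Qed.

Fixpoint countN (m : nat) (f : nat -> bool) : nat :=
  match m with O => O | S k => (countN k f + if f k then 1 else 0)%nat end.

Definition ind (b : bool) : R := if b then 1 else 0.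

Definition nonzerob (x : R) : bool := if Req_EM_T x 0 then false else true.

Lemma countN_ext m f g : (forall k, (k < m)%nat -> f k = g k) -> countN m f = countN m g.
Proof.
  induction m as [|m IH]; intros H; simpl; auto.
  rewrite IH by (intros; apply H; lia). rewrite H by lia. auto.
Qed.

Lemma countN_pos m f : (0 < countN m f)%nat -> exists j, (j < m)%nat /\ f j = true.
Proof.
  induction m as [|m IH]; simpl; intros H; [lia|].
  destruct (f m) eqn:E; [exists m; auto|].
  destruct IH as [j [Hj Hf]]; [lia|]. exists j. auto.
Qed.

Lemma countN_ge1 m f j : (j < m)%nat -> f j = true -> (1 <= countN m f)%nat.
Proof.
  induction m as [|m IH]; intros Hj Hf; [lia|]. simpl.
  destruct (Nat.eq_dec j m) as [->|Hne]; [rewrite Hf; lia|].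
  specialize (IH ltac:(lia) Hf). lia.
Qed.

Lemma countN_drop m f g j : (j < m)%nat -> f j = true -> g j = false ->
  (forall k, (k < m)%nat -> k <> j -> f k = g k) -> countN m f = S (countN m g).
Proof.
  induction m as [|m IH]; intros Hj Hf Hg H; [lia|]. simpl.
  destruct (Nat.eq_dec j m) as [->|Hne].
  - rewrite Hf, Hg, (countN_ext m f g) by (intros; apply H; lia). lia.
  - rewrite (IH ltac:(lia) Hf Hg) by (intros; apply H; lia). rewrite (H m) by lia. lia.
Qed.

Lemma INR_countN m f : INR (countN m f) = sumR m (fun k => ind (f k)).
Proof.
  induction m as [|m IH]; simpl; auto.
  rewrite plus_INR, IH. unfold ind. destruct (f m); simpl; lra.
Qed.

Lemma length_filter_seq (f : nat -> bool) st m :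
  length (filter f (seq st m)) = countN m (fun k => f (st + k)%nat).
Proof.
  induction m as [|m IH]; [reflexivity|].
  rewrite seq_S, filter_app, length_app, IH. simpl.
  destruct (f (st + m)%nat); simpl; lia.
Qed.

Lemma norm0_countN p v : norm0 p v = countN p (fun k => nonzerob (v k)).
Proof. unfold norm0. rewrite length_filter_seq. reflexivity. Qed.

Lemma ind_bounds b : 0 <= ind b <= 1.
Proof. unfold ind; destruct b; lra. Qed.

Lemma sumR_ind_le m f : sumR m (fun k => ind (f k)) <= INR m.
Proof. rewrite <- (Rmult_1_r (INR m)), <- sumR_const. apply sumR_le. intros. apply ind_bounds. Qed.

Lemma sumR_ind_nonneg m f : 0 <= sumR m (fun k => ind (f k)).
Proof. apply sumR_nonneg. intros. apply ind_bounds. Qed.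

Lemma sumR_ind_pos m f : 0 < sumR m (fun k => ind (f k)) -> exists k, (k < m)%nat /\ f k = true.
Proof. intros H. rewrite <- INR_countN in H. apply countN_pos, INR_lt. simpl. lra. Qed.

(** * Concave penalties and the scalar problem *)

Definition concave_nonneg (f : R -> R) : Prop :=
  forall a b t, 0 <= a -> 0 <= b -> 0 <= t <= 1 ->
    t * f a + (1 - t) * f b <= f (t * a + (1 - t) * b).

Definition nondecreasing_nonneg (f : R -> R) : Prop :=
  forall a b, 0 <= a -> a <= b -> f a <= f b.

Lemma concave_chord f x y z : concave_nonneg f -> 0 <= x -> x < y -> y < z ->
  (z - y) * f x + (y - x) * f z <= f y * (z - x).
Proof.
  intros Hc Hx Hxy Hyz.
  set (t := (z - y) / (z - x)).
  assert (Ht : 0 <= t <= 1).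
  { unfold t. split; [apply Rmult_le_pos; [lra|left; apply Rinv_0_lt_compat; lra]|].
    apply (Rmult_le_reg_r (z - x)); [lra|]. unfold Rdiv. rewrite Rmult_assoc, Rinv_l by lra. lra. }
  assert (H := Hc x z t Hx ltac:(lra) Ht).
  replace (t * x + (1 - t) * z) with y in H by (unfold t; field; lra).
  replace (z - y) with (t * (z - x)) by (unfold t; field; lra).
  replace (y - x) with ((1 - t) * (z - x)) by (unfold t; field; lra).
  nra.
Qed.

Lemma concave_increment_le_deriv f l a u v : concave_nonneg f ->
  derivable_pt_lim f a l -> 0 < a -> a <= u -> u <= v -> f v - f u <= l * (v - u).
Proof.
  intros Hc Hd Ha Hau Huv.
  destruct (Req_dec u v) as [->|Hne]; [lra|].
  set (K := (f v - f a) / (v - a)).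
  assert (HuK : f v - f u <= K * (v - u)).
  { destruct (Req_dec a u) as [<-|Hne2]; [unfold K; right; field; lra|].
    assert (H := concave_chord f a u v Hc ltac:(lra) ltac:(lra) ltac:(lra)).
    unfold K. apply (Rmult_le_reg_r (v - a)); [lra|].
    replace ((f v - f a) / (v - a) * (v - u) * (v - a)) with ((f v - f a) * (v - u))
      by (field; lra). nra. }
  assert (HKl : K <= l).
  { apply Rnot_lt_le. intros HK.
    destruct (Hd (K - l) ltac:(lra)) as [[del Hdel0] Hdel]. simpl in Hdel.
    set (h := Rmin (del / 2) ((v - a) / 2)).
    assert (Hh0 : 0 < h) by (apply Rmin_pos; lra).
    assert (Hh1 : h <= del / 2) by apply Rmin_l.
    assert (Hh2 : h <= (v - a) / 2) by apply Rmin_r.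
    specialize (Hdel h ltac:(lra) ltac:(rewrite Rabs_right; lra)). apply Rabs_def2 in Hdel.
    assert (H3 := concave_chord f a (a + h) v Hc ltac:(lra) ltac:(lra) ltac:(lra)).
    assert (K <= (f (a + h) - f a) / h); [|lra].
    unfold K. apply (Rmult_le_reg_r (v - a)); [lra|]. apply (Rmult_le_reg_r h); [lra|].
    replace ((f v - f a) / (v - a) * (v - a) * h) with ((f v - f a) * h) by (field; lra).
    replace ((f (a + h) - f a) / h * (v - a) * h) with ((f (a + h) - f a) * (v - a))
      by (field; lra). nra. }
  nra.
Qed.

Lemma le_limit_of_nondecreasing f L a : nondecreasing_nonneg f ->
  (forall e, 0 < e -> exists M, forall t, M <= t -> Rabs (f t - L) < e) ->
  0 <= a -> f a <= L.
Proof.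
  intros Hi Hlim Ha. apply Rnot_lt_le. intros H.
  destruct (Hlim (f a - L) ltac:(lra)) as [M HM].
  specialize (HM (Rmax M a) (Rmax_l _ _)). apply Rabs_def2 in HM.
  assert (f a <= f (Rmax M a)) by (apply Hi; [lra|apply Rmax_r]). lra.
Qed.

(* Mean value theorem twice: a function with nondecreasing derivative is convex. *)
Lemma three_point_of_deriv_mono (f f' : R -> R) t v A :
  (forall x, t <= x <= A -> derivable_pt_lim f x (f' x)) ->
  (forall x z, t < x -> x <= z -> z < A -> f' x <= f' z) -> t < v < A ->
  (f v - f t) * (A - v) <= (f A - f v) * (v - t).
Proof.
  intros Hd Hmono Hv.
  destruct (MVT_cor2 f f' t v ltac:(lra)) as [x [Ex Hx]]; [intros; apply Hd; lra|].
  destruct (MVT_cor2 f f' v A ltac:(lra)) as [z [Ez Hz]]; [intros; apply Hd; lra|].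
  rewrite Ex, Ez. assert (f' x <= f' z) by (apply Hmono; lra).
  assert (0 <= (v - t) * (A - v)) by nra. nra.
Qed.

Definition scalar_obj (pl : R -> R) (w x : R) : R := / 2 * x ^ 2 - w * x + pl x.

Lemma scalar_obj_deriv pl dp w x : derivable_pt_lim pl x (dp x) ->
  derivable_pt_lim (scalar_obj pl w) x (x - w + dp x).
Proof.
  intros H.
  replace (x - w + dp x) with ((/ 2 * (INR 2 * x ^ (2 - 1)) - w * 1) + dp x) by (simpl; field).
  apply (derivable_pt_lim_plus (fun x => / 2 * x ^ 2 - w * x) pl); [|exact H].
  apply (derivable_pt_lim_minus (fun x => / 2 * x ^ 2) (fun x => w * x)).
  - apply (derivable_pt_lim_scal (fun x => x ^ 2)). apply derivable_pt_lim_pow.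
  - apply (derivable_pt_lim_scal id). apply derivable_pt_lim_id.
Qed.

Lemma scalar_slope_deriv dp d2p w x : derivable_pt_lim dp x (d2p x) ->
  derivable_pt_lim (fun x => x - w + dp x) x (1 + d2p x).
Proof.
  intros H. replace (1 + d2p x) with ((1 - 0) + d2p x) by ring.
  apply (derivable_pt_lim_plus (fun x => x - w) dp); [|exact H].
  apply (derivable_pt_lim_minus id (fun _ => w));
    [apply derivable_pt_lim_id|apply derivable_pt_lim_const].
Qed.

Section ScalarMinimizer.

Variables (pl dp d2p : R -> R) (lam c1 w t : R).
Hypothesis Hlam : 0 < lam.
Hypothesis Hc1 : 0 <= c1 < 1.
Hypothesis Hpl0 : pl 0 = 0.
Hypothesis Hdp : forall x, 0 < x -> derivable_pt_lim pl x (dp x).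
Hypothesis Hd2p : forall x, 0 < x <= (1 - c1) * lam -> derivable_pt_lim dp x (d2p x).
Hypothesis Hd2p_mono : forall a b, 0 < a -> a <= b -> b <= (1 - c1) * lam -> - d2p b <= - d2p a.
Hypothesis Hlow : forall x, 0 <= x <= lam -> pl x >= / 2 * (lam ^ 2 - (Rmax (lam - x) 0) ^ 2).
Hypothesis Hdp_c1 : dp ((1 - c1) * lam) <= c1 * lam.
Hypothesis Ht : 0 < t < (1 - c1) * lam.
Hypothesis Hmin : forall x, 0 <= x -> scalar_obj pl w t <= scalar_obj pl w x.

Lemma scalar_min_stationary : t - w + dp t = 0.
Proof.
  assert (Hd := scalar_obj_deriv pl dp w t (Hdp t ltac:(lra))).
  assert (pr : derivable_pt (scalar_obj pl w) t) by (exists (t - w + dp t); exact Hd).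
  rewrite <- (deriv_minimum (scalar_obj pl w) 0 (2 * t) t pr ltac:(lra) ltac:(lra))
    by (intros; apply Hmin; lra).
  symmetry. apply derive_pt_eq_0. exact Hd.
Qed.

Lemma pl_ge_at_min : lam * t - t ^ 2 / 2 <= pl t.
Proof.
  assert (Hlt : pl t >= / 2 * (lam ^ 2 - (Rmax (lam - t) 0) ^ 2)) by (apply Hlow; nra).
  rewrite Rmax_left in Hlt by nra. lra.
Qed.

Lemma scalar_min_threshold_ge : lam <= w.
Proof.
  assert (H0 := Hmin 0 ltac:(lra)). assert (H := pl_ge_at_min).
  unfold scalar_obj in H0. rewrite Hpl0 in H0. nra.
Qed.

(* [x - w + dp x] is convex on [[t, (1-c1) lam]], vanishes at [t] and is
   nonpositive at the right end, hence nonpositive in between. *)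
Lemma scalar_slope_nonpos v : t < v < (1 - c1) * lam ->
  v - w + dp v <= 0 /\ (lam < w -> v - w + dp v < 0).
Proof.
  intros Hv.
  assert (Hw := scalar_min_threshold_ge).
  assert (H := three_point_of_deriv_mono (fun x => x - w + dp x) (fun x => 1 + d2p x)
    t v ((1 - c1) * lam)).
  cbv beta in H. rewrite scalar_min_stationary in H.
  specialize (H (fun x Hx => scalar_slope_deriv dp d2p w x (Hd2p x ltac:(lra)))).
  specialize (H (fun x z Hx Hxz Hz => ltac:(assert (- d2p z <= - d2p x)
                  by (apply Hd2p_mono; lra); lra)) Hv).
  split; [|intros Hlw]; apply Rnot_lt_le || apply Rnot_le_lt; intros Hpos; nra.
Qed.

Lemma scalar_obj_mvt : exists v, t < v < (1 - c1) * lam /\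
  scalar_obj pl w ((1 - c1) * lam) - scalar_obj pl w t = (v - w + dp v) * ((1 - c1) * lam - t).
Proof.
  destruct (MVT_cor2 (scalar_obj pl w) (fun x => x - w + dp x) t ((1 - c1) * lam))
    as [v [Ev Hv]]; [lra|intros; apply scalar_obj_deriv, Hdp; lra|].
  exists v. auto.
Qed.

Lemma scalar_min_threshold_eq : w = lam.
Proof.
  destruct (Rle_lt_or_eq_dec lam w scalar_min_threshold_ge) as [Hlt|]; [exfalso|auto].
  destruct scalar_obj_mvt as [v [Hv Ev]].
  assert (Hneg := proj2 (scalar_slope_nonpos v Hv) Hlt).
  assert (Hm := Hmin ((1 - c1) * lam) ltac:(nra)). nra.
Qed.

Lemma scalar_min_endpoints :
  scalar_obj pl w 0 = scalar_obj pl w t /\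
  scalar_obj pl w ((1 - c1) * lam) = scalar_obj pl w t.
Proof.
  assert (H0 := Hmin 0 ltac:(lra)). assert (HA := Hmin ((1 - c1) * lam) ltac:(nra)).
  split; apply Rle_antisym; auto.
  - assert (H := pl_ge_at_min).
    unfold scalar_obj. rewrite Hpl0, scalar_min_threshold_eq. nra.
  - destruct scalar_obj_mvt as [v [Hv Ev]].
    assert (Hneg := proj1 (scalar_slope_nonpos v Hv)). nra.
Qed.

End ScalarMinimizer.

(** * Coordinate moves, the basic inequality and Condition 1 *)

Definition upd (b : nat -> R) (j : nat) (v : R) : nat -> R :=
  fun k => if Nat.eq_dec k j then v else b k.

Lemma sumR_upd m (g : R -> R) b j v : (j < m)%nat ->
  sumR m (fun k => g (upd b j v k)) = sumR m (fun k => g (b k)) + g v - g (b j).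
Proof.
  intros Hj.
  assert (H : sumR m (fun k => g (upd b j v k) - g (b k)) = g v - g (b j)).
  { rewrite (sumR_single m _ j Hj); unfold upd.
    - destruct (Nat.eq_dec j j); congruence.
    - intros k Hk Hne. destruct (Nat.eq_dec k j); [congruence|lra]. }
  rewrite sumR_sub in H. lra.
Qed.

Lemma Xmul_upd p X b j v i : (j < p)%nat ->
  Xmul p X (upd b j v) i = Xmul p X b i + X i j * (v - b j).
Proof.
  intros Hj. unfold Xmul.
  assert (H : sumR p (fun k => X i k * upd b j v k - X i k * b k) = X i j * (v - b j)).
  { rewrite (sumR_single p _ j Hj); unfold upd.
    - destruct (Nat.eq_dec j j); [lra|congruence].
    - intros k Hk Hne. destruct (Nat.eq_dec k j); [congruence|lra]. }
  rewrite sumR_sub in H. lra.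
Qed.

Lemma Xmul_sub p X b c i : Xmul p X (fun k => b k - c k) i = Xmul p X b i - Xmul p X c i.
Proof. unfold Xmul. rewrite <- sumR_sub. apply sumR_ext. intros; ring. Qed.

Lemma Xmul_scal p X r b i : Xmul p X (fun k => r * b k) i = r * Xmul p X b i.
Proof. unfold Xmul. rewrite <- sumR_scal. apply sumR_ext. intros; ring. Qed.

Lemma Xmul_affine p X u v th i :
  Xmul p X (fun k => (1 - th) * u k + th * v k) i = (1 - th) * Xmul p X u i + th * Xmul p X v i.
Proof. unfold Xmul. rewrite <- !sumR_scal, <- sumR_add. apply sumR_ext. intros; ring. Qed.

Lemma objL_upd n p X y lam0 pl b j v :
  (0 < n)%nat -> (j < p)%nat -> sumR n (fun i => X i j ^ 2) = INR n ->
  objL n p X y lam0 pl (upd b j v) - objL n p X y lam0 pl b =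
  - (v - b j) * (sumR n (fun i => X i j * (y i - Xmul p X b i)) / INR n)
  + (v - b j) ^ 2 / 2 + lam0 * (Rabs v - Rabs (b j)) + (pl (Rabs v) - pl (Rabs (b j))).
Proof.
  intros Hn Hj Hcol. unfold objL.
  rewrite (sumR_upd p Rabs b j v Hj), (sumR_upd p (fun x => pl (Rabs x)) b j v Hj).
  assert (E : sumR n (fun i => (y i - Xmul p X (upd b j v) i) ^ 2) =
     sumR n (fun i => (y i - Xmul p X b i) ^ 2)
     - 2 * (v - b j) * sumR n (fun i => X i j * (y i - Xmul p X b i))
     + (v - b j) ^ 2 * sumR n (fun i => X i j ^ 2)).
  { rewrite <- !sumR_scal, <- sumR_sub, <- sumR_add. apply sumR_ext. intros i Hi.
    rewrite Xmul_upd by auto. ring. }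
  rewrite E, Hcol. assert (0 < INR n) by (apply lt_0_INR; lia).
  field. lra.
Qed.

Definition sgn (x : R) : R := if Rlt_dec 0 x then 1 else -1.

Lemma sgn_spec x : (sgn x = 1 \/ sgn x = -1) /\ x = sgn x * Rabs x.
Proof.
  unfold sgn. destruct (Rlt_dec 0 x).
  - rewrite Rabs_right by lra. lra.
  - rewrite Rabs_left1 by lra. lra.
Qed.

Lemma Rabs_sgn_mult x r : 0 <= r -> Rabs (sgn x * r) = r.
Proof.
  intros Hr. destruct (sgn_spec x) as [[-> | ->] _].
  - rewrite Rmult_1_l. apply Rabs_right. lra.
  - replace (-1 * r) with (- r) by ring. rewrite Rabs_Ropp. apply Rabs_right. lra.
Qed.

Definition restricted_eigenvalue (n p s : nat) (X : nat -> nat -> R) (kappa0 : R) : Prop :=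
  forall d : nat -> R, sqrt (sumR p (fun j => d j ^ 2)) = 1 -> (norm0 p d < 2 * s)%nat ->
    kappa0 <= / sqrt (INR n) * sqrt (sumR n (fun i => Xmul p X d i ^ 2)).

Lemma norm0_scal p r d : r <> 0 -> norm0 p (fun k => r * d k) = norm0 p d.
Proof.
  intros Hr. rewrite !norm0_countN. apply countN_ext. intros k _. unfold nonzerob.
  destruct (Req_EM_T (r * d k) 0) as [E|E], (Req_EM_T (d k) 0) as [F|F]; auto.
  - apply Rmult_integral in E. tauto.
  - rewrite F, Rmult_0_r in E. tauto.
Qed.

Lemma le_sqrt_sq k z : 0 <= k -> 0 <= z -> k <= sqrt z -> k ^ 2 <= z.
Proof.
  intros Hk Hz H. rewrite <- (sqrt_sqrt z Hz).
  assert (0 <= sqrt z) by apply sqrt_pos. nra.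
Qed.

Lemma restricted_eigenvalue_sq n p s X kappa0 d : (0 < n)%nat -> 0 < kappa0 ->
  restricted_eigenvalue n p s X kappa0 ->
  0 < sumR p (fun k => d k ^ 2) -> (norm0 p d < 2 * s)%nat ->
  kappa0 ^ 2 * sumR p (fun k => d k ^ 2) <= / INR n * sumR n (fun i => Xmul p X d i ^ 2).
Proof.
  intros Hn Hk HRE HQ H0.
  set (Q := sumR p (fun k => d k ^ 2)) in *.
  set (SX := sumR n (fun i => Xmul p X d i ^ 2)).
  assert (HnR : 0 < INR n) by (apply lt_0_INR; lia).
  assert (HSX : 0 <= SX) by apply sumR_sq_nonneg.
  specialize (HRE (fun k => / sqrt Q * d k)).
  rewrite norm0_scal in HRE by (apply Rinv_neq_0_compat, Rgt_not_eq, sqrt_lt_R0; auto).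
  assert (Hsq : forall x, (/ sqrt Q * x) ^ 2 = / Q * x ^ 2).
  { intros x. rewrite <- (sqrt_sqrt Q) at 2 by lra.
    field. apply Rgt_not_eq, sqrt_lt_R0. auto. }
  rewrite (sumR_ext p _ (fun j => / Q * d j ^ 2)) in HRE by (intros; apply Hsq).
  rewrite (sumR_ext n _ (fun i => / Q * Xmul p X d i ^ 2)) in HRE
    by (intros; rewrite (Xmul_scal p X (/ sqrt Q) d); apply Hsq).
  rewrite !sumR_scal in HRE. fold Q SX in HRE.
  rewrite Rinv_l, sqrt_1 in HRE by (apply Rgt_not_eq; lra).
  specialize (HRE eq_refl H0).
  rewrite <- sqrt_inv, <- sqrt_mult_alt in HRE by (left; apply Rinv_0_lt_compat; lra).
  apply le_sqrt_sq in HRE; [|lra|apply Rmult_le_pos; [left; apply Rinv_0_lt_compat; lra|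
    apply Rmult_le_pos; [left; apply Rinv_0_lt_compat|]; lra]].
  apply (Rmult_le_reg_r (/ Q)); [apply Rinv_0_lt_compat; lra|].
  replace (kappa0 ^ 2 * Q * / Q) with (kappa0 ^ 2) by (field; lra).
  replace (/ INR n * SX * / Q) with (/ INR n * (/ Q * SX)) by ring.
  exact HRE.
Qed.

Lemma norm1_range_0 s v : norm1_range 0 s v = sumR s (fun k => Rabs (v k)).
Proof. unfold norm1_range, sum_range. rewrite Nat.sub_0_r. reflexivity. Qed.

Lemma norm1_range_nonneg a b v : 0 <= norm1_range a b v.
Proof. apply sumR_nonneg. intros. apply Rabs_pos. Qed.

(* Per-coordinate right-hand side of the basic inequality on the event [E]. *)
Definition coord_gain (lam0 : R) (pl : R -> R) (bk b0k : R) : R :=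
  lam0 / 2 * Rabs (bk - b0k) + lam0 * (Rabs b0k - Rabs bk) + (pl (Rabs b0k) - pl (Rabs bk)).

Lemma coord_gain_support pl dp lam0 a bk b0k :
  concave_nonneg pl -> nondecreasing_nonneg pl -> derivable_pt_lim pl a (dp a) ->
  0 < a -> dp a <= lam0 / 4 -> 0 <= lam0 -> pl 0 = 0 ->
  a < Rabs b0k -> (bk = 0 \/ a <= Rabs bk) ->
  coord_gain lam0 pl bk b0k <= 7 / 4 * lam0 * Rabs (bk - b0k) + pl a * ind (negb (nonzerob bk)).
Proof.
  intros Hc Hi Hd Ha Hdp Hl0 Hp0 Hb0 Hbk. unfold coord_gain, ind, nonzerob.
  destruct (Req_EM_T bk 0) as [->|Hne]; simpl.
  - rewrite Rabs_R0, Hp0, Rminus_0_l, Rabs_Ropp.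
    assert (H := concave_increment_le_deriv pl (dp a) a a (Rabs b0k) Hc Hd Ha ltac:(lra) ltac:(lra)).
    nra.
  - destruct Hbk as [|Hbk]; [congruence|].
    assert (H1 := Rabs_triang_inv b0k bk). rewrite Rabs_minus_sym in H1.
    assert (H2 := Rabs_triang_inv bk b0k).
    assert (Hp : pl (Rabs b0k) - pl (Rabs bk) <= lam0 / 4 * Rabs (bk - b0k)).
    { destruct (Rle_dec (Rabs bk) (Rabs b0k)) as [Hle|Hgt].
      - assert (H := concave_increment_le_deriv pl (dp a) a _ _ Hc Hd Ha Hbk Hle). nra.
      - assert (pl (Rabs b0k) <= pl (Rabs bk)) by (apply Hi; [apply Rabs_pos|lra]).
        assert (0 <= Rabs (bk - b0k)) by apply Rabs_pos. nra. }
    nra.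
Qed.

Lemma coord_gain_off_support pl lam0 a bk :
  nondecreasing_nonneg pl -> 0 <= a -> pl 0 = 0 -> (bk = 0 \/ a <= Rabs bk) ->
  coord_gain lam0 pl bk 0 <= - (lam0 / 2) * Rabs (bk - 0) - pl a * ind (nonzerob bk).
Proof.
  intros Hi Ha Hp0 Hbk. unfold coord_gain, ind, nonzerob.
  rewrite Rminus_0_r, Rabs_R0, Hp0.
  destruct (Req_EM_T bk 0) as [->|Hne]; [rewrite Rabs_R0, Hp0; lra|].
  destruct Hbk as [|Hbk]; [congruence|].
  assert (pl a <= pl (Rabs bk)) by (apply Hi; lra). lra.
Qed.

Lemma sumR_Xmul_XTmul n p X e d :
  sumR n (fun i => e i * Xmul p X d i) = sumR p (fun k => d k * XTmul n X e k).
Proof.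
  unfold Xmul, XTmul.
  rewrite (sumR_ext n _ (fun i => sumR p (fun k => d k * (X i k * e i))))
    by (intros; rewrite <- sumR_scal; apply sumR_ext; intros; ring).
  rewrite sumR_swap. apply sumR_ext. intros k _. rewrite <- sumR_scal. apply sumR_ext. intros; ring.
Qed.

Definition cone_excess n p s (X : nat -> nat -> R) (beta0 : nat -> R) lam0 (b : nat -> R) : R :=
  / INR n * sumR n (fun i => Xmul p X (fun k => b k - beta0 k) i ^ 2)
  + lam0 * norm1_range s p (fun k => b k - beta0 k)
  - 7 * lam0 * norm1_range 0 s (fun k => b k - beta0 k).

Lemma Rabs_affine_same_sign th x z : 0 <= th <= 1 -> 0 <= x * z ->
  Rabs ((1 - th) * x + th * z) = (1 - th) * Rabs x + th * Rabs z.
Proof.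
  intros Hth Hxz.
  destruct (Rle_dec 0 x), (Rle_dec 0 z).
  - rewrite !Rabs_right by nra. ring.
  - assert (x = 0) by nra. subst x. rewrite Rabs_R0, Rmult_0_r, !Rplus_0_l, Rabs_mult.
    rewrite (Rabs_right th) by lra. ring.
  - assert (z = 0) by nra. subst z. rewrite Rabs_R0, Rmult_0_r, !Rplus_0_r, Rabs_mult.
    rewrite (Rabs_right (1 - th)) by lra. ring.
  - rewrite !Rabs_left1 by nra. ring.
Qed.

Lemma cone_excess_convex n p s X beta0 lam0 b b0 ba th :
  (0 < n)%nat -> 0 <= lam0 -> 0 <= th <= 1 ->
  (forall k, b k - beta0 k = (1 - th) * (b0 k - beta0 k) + th * (ba k - beta0 k)) ->
  (forall k, (k < s)%nat -> 0 <= (b0 k - beta0 k) * (ba k - beta0 k)) ->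
  cone_excess n p s X beta0 lam0 b <=
  (1 - th) * cone_excess n p s X beta0 lam0 b0 + th * cone_excess n p s X beta0 lam0 ba.
Proof.
  intros Hn Hl Hth Hcomb Hsame.
  set (u := fun k => b0 k - beta0 k). set (v := fun k => ba k - beta0 k).
  unfold cone_excess.
  replace (fun k => b k - beta0 k) with (fun k => (1 - th) * u k + th * v k)
    by (apply functional_extensionality; intros; symmetry; apply Hcomb).
  fold u v.
  assert (HnR : 0 < / INR n) by (apply Rinv_0_lt_compat, lt_0_INR; lia).
  assert (Hquad : sumR n (fun i => Xmul p X (fun k => (1 - th) * u k + th * v k) i ^ 2)
     <= (1 - th) * sumR n (fun i => Xmul p X u i ^ 2) + th * sumR n (fun i => Xmul p X v i ^ 2)).
  { rewrite <- !sumR_scal, <- sumR_add. apply sumR_le. intros i _. rewrite Xmul_affine.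
    assert (0 <= th * (1 - th) * (Xmul p X u i - Xmul p X v i) ^ 2)
      by (apply Rmult_le_pos; [nra|apply pow2_ge_0]). nra. }
  assert (Hoff : norm1_range s p (fun k => (1 - th) * u k + th * v k)
     <= (1 - th) * norm1_range s p u + th * norm1_range s p v).
  { unfold norm1_range, sum_range. rewrite <- !sumR_scal, <- sumR_add. apply sumR_le. intros k _.
    eapply Rle_trans; [apply Rabs_triang|].
    rewrite !Rabs_mult, (Rabs_right (1 - th)), (Rabs_right th) by lra. lra. }
  assert (Hon : norm1_range 0 s (fun k => (1 - th) * u k + th * v k)
     = (1 - th) * norm1_range 0 s u + th * norm1_range 0 s v).
  { rewrite !norm1_range_0, <- !sumR_scal, <- sumR_add. apply sumR_ext. intros k Hk.
    apply Rabs_affine_same_sign; [lra|apply (Hsame k Hk)]. }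
  rewrite Hon.
  assert (Hquad' := Rmult_le_compat_l (/ INR n) _ _ ltac:(lra) Hquad).
  nra.
Qed.

Definition smallb (a x : R) : bool :=
  if Rlt_dec 0 (Rabs x) then (if Rlt_dec (Rabs x) a then true else false) else false.

Lemma smallb_spec a x : smallb a x = true <-> 0 < Rabs x < a.
Proof.
  unfold smallb. destruct (Rlt_dec 0 (Rabs x)), (Rlt_dec (Rabs x) a); split; intros; lra || discriminate.
Qed.

Lemma countN_small_upd p a b j v : (j < p)%nat -> smallb a (b j) = true -> smallb a v = false ->
  countN p (fun k => smallb a (b k)) = S (countN p (fun k => smallb a (upd b j v k))).
Proof.
  intros Hj Hb Hv. apply (countN_drop p _ _ j Hj Hb).
  - unfold upd. destruct (Nat.eq_dec j j); congruence.
  - intros k _ Hne. unfold upd. destruct (Nat.eq_dec k j); congruence.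
Qed.

Lemma smallb_upd_threshold a (b : nat -> R) j : 0 < a ->
  smallb a 0 = false /\ smallb a (sgn (b j) * a) = false.
Proof.
  intros Ha. split; apply Bool.not_true_iff_false; rewrite smallb_spec.
  - rewrite Rabs_R0. lra.
  - rewrite Rabs_sgn_mult by lra. lra.
Qed.

(** * The cone inequality at a global minimizer *)

Section GlobalMinimizer.

Variables (n p s : nat) (X : nat -> nat -> R) (y eps beta0 : nat -> R) (lam0 : R).
Variables (pl dp d2p : R -> R) (lam c1 kappa0 pinf : R).
Hypothesis Hn : (0 < n)%nat.
Hypothesis Hsp : (s <= p)%nat.
Hypothesis Hcol : forall j, (j < p)%nat -> sumR n (fun i => X i j ^ 2) = INR n.
Hypothesis Hmodel : forall i, (i < n)%nat -> y i = Xmul p X beta0 i + eps i.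
Hypothesis Hsupp2 : forall j, (s <= j < p)%nat -> beta0 j = 0.
Hypothesis Hl0 : 0 <= lam0.
Hypothesis Hlam : 0 < lam.
Hypothesis Hpl0 : pl 0 = 0.
Hypothesis Hplnn : forall t, 0 <= t -> 0 <= pl t.
Hypothesis Hpinf : forall e, 0 < e -> exists M, forall t, M <= t -> Rabs (pl t - pinf) < e.
Hypothesis Hdp : forall t, 0 < t -> derivable_pt_lim pl t (dp t).
Hypothesis Hkappa0 : 0 < kappa0.
Hypothesis HRE : restricted_eigenvalue n p s X kappa0.
Hypothesis Hc1 : 0 <= c1 < 1.
Hypothesis Hincr : nondecreasing_nonneg pl.
Hypothesis Hconc : concave_nonneg pl.
Hypothesis Hlow : forall t, 0 <= t <= lam -> pl t >= / 2 * (lam ^ 2 - (Rmax (lam - t) 0) ^ 2).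
Hypothesis Hdp_c1 : dp ((1 - c1) * lam) <= c1 * lam.
Hypothesis Hd2p : forall t, 0 < t <= (1 - c1) * lam -> derivable_pt_lim dp t (d2p t).
Hypothesis Hd2p_mono : forall a b, 0 < a -> a <= b -> b <= (1 - c1) * lam -> - d2p b <= - d2p a.
Hypothesis Hdp_lam0 : dp ((1 - c1) * lam) <= lam0 / 4.
Hypothesis Hbmin : forall j, (j < s)%nat ->
  Rabs (beta0 j) > Rmax ((1 - c1) * lam) (2 * / kappa0 * sqrt pinf).
Hypothesis HE : forall j, (j < p)%nat -> Rabs (/ INR n * XTmul n X eps j) <= lam0 / 2.

Let L := objL n p X y lam0 pl.
Let F := cone_excess n p s X beta0 lam0.

Lemma objL_upd_ray b j x : (j < p)%nat -> 0 <= x ->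
  let w := sgn (b j) * (sumR n (fun i => X i j * (y i - Xmul p X b i)) / INR n) + Rabs (b j) - lam0 in
  L (upd b j (sgn (b j) * x)) - L b = scalar_obj pl w x - scalar_obj pl w (Rabs (b j)).
Proof.
  intros Hj Hx w. unfold L. rewrite objL_upd, Rabs_sgn_mult by auto.
  destruct (sgn_spec (b j)) as [Hs Hbj]. unfold w, scalar_obj.
  set (r := sumR n _ / INR n). set (sg := sgn (b j)) in *. set (t := Rabs (b j)) in *.
  clearbody r sg t. rewrite Hbj. destruct Hs as [-> | ->]; field.
Qed.

Lemma minimizer_coord_move b j : (j < p)%nat ->
  (forall c, L b <= L c) -> 0 < Rabs (b j) < (1 - c1) * lam ->
  L (upd b j 0) = L b /\ L (upd b j (sgn (b j) * ((1 - c1) * lam))) = L b.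
Proof.
  intros Hj Hmin Ht.
  assert (Hray := objL_upd_ray b j). cbv zeta in Hray.
  set (w := sgn (b j) * _ + _ - _) in Hray.
  assert (Hsmin : forall x, 0 <= x -> scalar_obj pl w (Rabs (b j)) <= scalar_obj pl w x).
  { intros x Hx. assert (H := Hmin (upd b j (sgn (b j) * x))). assert (E := Hray x Hj Hx). lra. }
  destruct (scalar_min_endpoints pl dp d2p lam c1 w (Rabs (b j)) Hlam Hc1 Hpl0 Hdp Hd2p
    Hd2p_mono Hlow Hdp_c1 Ht Hsmin) as [E0 EA].
  assert (H0 := Hray 0 Hj ltac:(lra)). rewrite Rmult_0_r in H0.
  assert (HA := Hray ((1 - c1) * lam) Hj ltac:(nra)).
  split; lra.
Qed.

Lemma noise_inner_le d :
  / INR n * sumR n (fun i => eps i * Xmul p X d i) <= lam0 / 2 * sumR p (fun k => Rabs (d k)).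
Proof.
  rewrite sumR_Xmul_XTmul, <- !sumR_scal. apply sumR_le. intros k Hk.
  assert (H := Rle_abs (d k * (/ INR n * XTmul n X eps k))). rewrite Rabs_mult in H.
  assert (0 <= Rabs (d k)) by apply Rabs_pos. specialize (HE k Hk). nra.
Qed.

Lemma basic_inequality b : L b <= L beta0 ->
  / 2 * (/ INR n * sumR n (fun i => Xmul p X (fun k => b k - beta0 k) i ^ 2)) <=
  sumR p (fun k => coord_gain lam0 pl (b k) (beta0 k)).
Proof.
  intros Hob. unfold L, objL in Hob.
  set (d := fun k => b k - beta0 k).
  assert (HnR : 0 < INR n) by (apply lt_0_INR; lia).
  rewrite (sumR_ext n (fun i => (y i - Xmul p X b i) ^ 2)
     (fun i => eps i ^ 2 - 2 * (eps i * Xmul p X d i) + Xmul p X d i ^ 2)) in Hob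
    by (intros; unfold d; rewrite Xmul_sub, Hmodel by auto; ring).
  rewrite (sumR_ext n (fun i => (y i - Xmul p X beta0 i) ^ 2) (fun i => eps i ^ 2)) in Hob
    by (intros; rewrite Hmodel by auto; ring).
  rewrite sumR_add, sumR_sub, sumR_scal in Hob.
  assert (Hnoise := noise_inner_le d).
  unfold coord_gain. rewrite !sumR_add, !sumR_scal.
  rewrite (sumR_sub p (fun k => Rabs (beta0 k))), (sumR_sub p (fun k => pl (Rabs (beta0 k)))).
  replace (/ (2 * INR n)) with (/ 2 * / INR n) in Hob by (field; lra).
  change (fun k => Rabs (b k - beta0 k)) with (fun k => Rabs (d k)).
  set (E := sumR n (fun i => eps i ^ 2)) in *.
  set (C := sumR n (fun i => eps i * Xmul p X d i)) in *.
  set (Q := sumR n (fun i => Xmul p X d i ^ 2)) in *.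
  lra.
Qed.

Lemma beta_min_threshold j : (j < s)%nat -> (1 - c1) * lam < Rabs (beta0 j).
Proof.
  intros Hj. apply (proj1 (Rmax_Rlt _ _ _) (Hbmin j Hj)).
Qed.

Lemma pl_threshold_le_pinf : pl ((1 - c1) * lam) <= pinf.
Proof. apply (le_limit_of_nondecreasing pl pinf _ Hincr Hpinf). nra. Qed.

(* The beta-min condition makes a missed true coordinate cost at least [pinf]
   in the restricted-eigenvalue budget. *)
Lemma beta_min_penalty j : (j < s)%nat -> pinf <= kappa0 ^ 2 / 4 * beta0 j ^ 2.
Proof.
  intros Hj. assert (H := Hbmin j Hj).
  assert (H2 := Rmax_r ((1 - c1) * lam) (2 * / kappa0 * sqrt pinf)).
  assert (Hpinf0 : 0 <= pinf) by (assert (H3 := pl_threshold_le_pinf);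
    assert (0 <= pl ((1 - c1) * lam)) by (apply Hplnn; nra); lra).
  assert (Hq := sqrt_sqrt pinf Hpinf0). assert (Hq0 := sqrt_pos pinf).
  replace (beta0 j ^ 2) with (Rabs (beta0 j) ^ 2) by (rewrite <- !Rsqr_pow2; symmetry; apply Rsqr_abs).
  assert (kappa0 * Rabs (beta0 j) > 2 * sqrt pinf).
  { replace (2 * sqrt pinf) with (kappa0 * (2 * / kappa0 * sqrt pinf)) by (field; lra).
    apply Rmult_gt_compat_l; lra. }
  nra.
Qed.

Definition thresholded (a : R) (b : nat -> R) : Prop :=
  forall j, (j < p)%nat -> b j = 0 \/ a <= Rabs (b j).

Definition zeros_on_support (b : nat -> R) : R := sumR s (fun k => ind (negb (nonzerob (b k)))).
Definition nonzeros_off_support (b : nat -> R) : R :=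
  sumR (p - s) (fun k => ind (nonzerob (b (s + k)%nat))).

Lemma thresholded_of_no_small a b : (countN p (fun k => smallb a (b k)) = 0)%nat ->
  thresholded a b.
Proof.
  intros H0 j Hj. destruct (Req_dec (b j) 0) as [|Hne]; [left; auto|right].
  apply Rnot_lt_le. intros Hlt.
  assert (Hs : smallb a (b j) = true) by (apply smallb_spec; split; [apply Rabs_pos_lt|]; auto).
  assert (H := countN_ge1 p (fun k => smallb a (b k)) j Hj Hs). lia.
Qed.

Lemma gain_sum_bound b : thresholded ((1 - c1) * lam) b ->
  let d := fun k => b k - beta0 k in
  sumR p (fun k => coord_gain lam0 pl (b k) (beta0 k)) <=
  7 / 4 * lam0 * norm1_range 0 s d + pl ((1 - c1) * lam) * zeros_on_support b
  - lam0 / 2 * norm1_range s p d - pl ((1 - c1) * lam) * nonzeros_off_support b.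
Proof.
  intros Hthr d. set (a := (1 - c1) * lam) in *. assert (Ha : 0 < a) by (unfold a; nra).
  rewrite (sumR_split s p _ Hsp), norm1_range_0.
  unfold norm1_range, sum_range, zeros_on_support, nonzeros_off_support.
  assert (Hlo : sumR s (fun k => coord_gain lam0 pl (b k) (beta0 k)) <=
    sumR s (fun k => 7 / 4 * lam0 * Rabs (d k) + pl a * ind (negb (nonzerob (b k))))).
  { apply sumR_le. intros k Hk.
    apply (coord_gain_support pl dp); auto using beta_min_threshold.
    apply Hthr. lia. }
  assert (Hhi : sumR (p - s) (fun k => coord_gain lam0 pl (b (s + k)%nat) (beta0 (s + k)%nat)) <=
    sumR (p - s) (fun k => - (lam0 / 2) * Rabs (d (s + k)%nat) - pl a * ind (nonzerob (b (s + k)%nat)))).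
  { apply sumR_le. intros k Hk. unfold d. rewrite Hsupp2 by lia.
    apply coord_gain_off_support; [auto|lra|auto|apply Hthr; lia]. }
  rewrite sumR_add, !sumR_scal in Hlo. rewrite sumR_sub, !sumR_scal in Hhi.
  lra.
Qed.

Lemma norm0_lt_of_counts b : nonzeros_off_support b < zeros_on_support b ->
  (norm0 p (fun k => (b k - beta0 k)%R) < 2 * s)%nat.
Proof.
  intros Hlt. apply INR_lt. rewrite norm0_countN, INR_countN, (sumR_split s p _ Hsp), mult_INR.
  rewrite (sumR_ext (p - s) _ (fun k => ind (nonzerob (b (s + k)%nat))))
    by (intros; rewrite Hsupp2, Rminus_0_r by lia; reflexivity).
  assert (H1 := sumR_ind_le s (fun k => nonzerob (b k - beta0 k))).
  assert (H2 := sumR_ind_le s (fun k => negb (nonzerob (b k)))).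
  unfold zeros_on_support, nonzeros_off_support in *. simpl (INR 2). lra.
Qed.

Lemma zeros_on_support_cost b :
  pl ((1 - c1) * lam) * zeros_on_support b <=
  kappa0 ^ 2 / 4 * sumR s (fun k => (b k - beta0 k) ^ 2).
Proof.
  assert (Hpa := pl_threshold_le_pinf). unfold zeros_on_support.
  rewrite <- !sumR_scal. apply sumR_le. intros k Hk. unfold ind, nonzerob.
  destruct (Req_EM_T (b k) 0) as [->|]; simpl.
  - assert (H := beta_min_penalty k Hk). nra.
  - assert (0 <= (b k - beta0 k) ^ 2) by apply pow2_ge_0. nra.
Qed.

(* If [b] misses more true coordinates than it adds false ones, [b - beta0]
   has fewer than [2 s] nonzeros, so Condition 1 pays for the missed ones. *)
Lemma support_count_absorbed b :
  pl ((1 - c1) * lam) * (zeros_on_support b - nonzeros_off_support b) <=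
  / 4 * (/ INR n * sumR n (fun i => Xmul p X (fun k => b k - beta0 k) i ^ 2)).
Proof.
  set (d := fun k => b k - beta0 k). set (pa := pl ((1 - c1) * lam)).
  assert (Hpa : 0 <= pa) by (apply Hplnn; nra).
  assert (HSX : 0 <= / INR n * sumR n (fun i => Xmul p X d i ^ 2))
    by (apply Rmult_le_pos; [left; apply Rinv_0_lt_compat, lt_0_INR; lia|apply sumR_sq_nonneg]).
  assert (HK2 : 0 <= nonzeros_off_support b) by apply sumR_ind_nonneg.
  destruct (Rle_dec (zeros_on_support b) (nonzeros_off_support b)) as [|Hgt]; [nra|].
  destruct (sumR_ind_pos s (fun k => negb (nonzerob (b k)))) as [k0 [Hk0 Hz]]; [fold (zeros_on_support b); lra|].
  assert (HQ : 0 < sumR p (fun k => d k ^ 2)).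
  { apply Rlt_le_trans with (d k0 ^ 2);
      [|apply (sumR_term_le p (fun k => d k ^ 2)); [intros; apply pow2_ge_0|lia]].
    unfold nonzerob in Hz. destruct (Req_EM_T (b k0) 0) as [Hb|]; [|discriminate].
    unfold d. rewrite Hb. assert (H := beta_min_threshold k0 Hk0).
    replace ((0 - beta0 k0) ^ 2) with (Rabs (beta0 k0) ^ 2) by (rewrite <- !Rsqr_pow2, <- Rsqr_abs; unfold Rsqr; ring).
    assert (0 < (1 - c1) * lam) by nra. nra. }
  assert (HRE2 := restricted_eigenvalue_sq n p s X kappa0 d Hn Hkappa0 HRE HQ
    (norm0_lt_of_counts b ltac:(lra))).
  assert (Hcost := zeros_on_support_cost b).
  assert (sumR s (fun k => d k ^ 2) <= sumR p (fun k => d k ^ 2)).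
  { rewrite (sumR_split s p _ Hsp). assert (H := sumR_sq_nonneg (p - s) (fun k => d (s + k)%nat)). lra. }
  fold pa in Hcost. change (fun k => (b k - beta0 k) ^ 2) with (fun k => d k ^ 2) in Hcost.
  assert (0 <= pa * nonzeros_off_support b) by (apply Rmult_le_pos; auto).
  assert (kappa0 ^ 2 / 4 * sumR s (fun k => d k ^ 2) <= kappa0 ^ 2 / 4 * sumR p (fun k => d k ^ 2))
    by (apply Rmult_le_compat_l; nra).
  lra.
Qed.

Lemma thresholded_minimizer_cone b : thresholded ((1 - c1) * lam) b ->
  (forall c, L b <= L c) -> F b <= 0.
Proof.
  intros Hthr Hmin.
  assert (BI := basic_inequality b (Hmin beta0)).
  assert (HG := gain_sum_bound b Hthr). cbv zeta in HG.
  assert (Habs := support_count_absorbed b).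
  assert (HN2 := norm1_range_nonneg s p (fun k => b k - beta0 k)).
  unfold F, cone_excess. nra.
Qed.

(* Both moves keep [b j - beta0 j] on one side of [0] since
   [|beta0 j| > (1 - c1) lam] on the support, so [F] is convex along them. *)
Lemma cone_excess_nonpos_of_moves b j : 0 < Rabs (b j) < (1 - c1) * lam ->
  F (upd b j 0) <= 0 -> F (upd b j (sgn (b j) * ((1 - c1) * lam))) <= 0 -> F b <= 0.
Proof.
  intros Ht F0 FA. set (a := (1 - c1) * lam) in *.
  set (th := Rabs (b j) / a).
  assert (Hth : 0 <= th <= 1).
  { unfold th. split; [apply Rmult_le_pos; [lra|left; apply Rinv_0_lt_compat; lra]|].
    apply (Rmult_le_reg_r a); [lra|]. unfold Rdiv. rewrite Rmult_assoc, Rinv_l by lra. lra. }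
  destruct (sgn_spec (b j)) as [Hsg Hbj].
  assert (Hconv : F b <= (1 - th) * F (upd b j 0) + th * F (upd b j (sgn (b j) * a))).
  { apply cone_excess_convex; auto; intros k; unfold upd; destruct (Nat.eq_dec k j) as [->|];
      try (intros; ring || apply Rle_0_sqr).
    - rewrite Hbj at 1. unfold th. field. lra.
    - intros Hk. destruct (proj1 (Rmax_Rlt _ _ _) (Hbmin j Hk)) as [H _]. fold a in H.
      destruct Hsg as [-> | ->]; destruct (Rle_dec 0 (beta0 j));
        [rewrite Rabs_right in H|rewrite Rabs_left in H|rewrite Rabs_right in H|rewrite Rabs_left in H];
        nra. }
  nra.
Qed.

Lemma minimizer_cone_excess_nonpos b :
  (forall c, L b <= L c) -> F b <= 0.
Proof.
  set (a := (1 - c1) * lam). assert (Ha : 0 < a) by (unfold a; nra).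
  remember (countN p (fun k => smallb a (b k))) as N eqn:HN.
  revert b HN. induction N as [N IH] using lt_wf_ind. intros b HN Hmin.
  destruct N as [|N].
  - apply thresholded_minimizer_cone; auto. apply thresholded_of_no_small. auto.
  - destruct (countN_pos p (fun k => smallb a (b k)) ltac:(lia)) as [j [Hj Hsj]].
    assert (Ht := proj1 (smallb_spec _ _) Hsj).
    destruct (minimizer_coord_move b j Hj Hmin Ht) as [E0 EA].
    destruct (smallb_upd_threshold a b j Ha) as [S0 SA].
    assert (F0 : F (upd b j 0) <= 0).
    { apply (IH N); [lia| |intros; rewrite E0; auto].
      rewrite (countN_small_upd p a b j 0 Hj Hsj S0) in HN. lia. }
    assert (FA : F (upd b j (sgn (b j) * a)) <= 0).
    { apply (IH N); [lia| |intros; unfold a; rewrite EA; auto].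
      rewrite (countN_small_upd p a b j _ Hj Hsj SA) in HN. lia. }
    exact (cone_excess_nonpos_of_moves b j Ht F0 FA).
Qed.

End GlobalMinimizer.

(** * Top-[s] sets and the l2 bounds *)

Definition sumL (f : nat -> R) (l : list nat) : R := fold_right (fun j acc => f j + acc) 0 l.

Lemma sumL_app f l1 l2 : sumL f (l1 ++ l2) = sumL f l1 + sumL f l2.
Proof. induction l1 as [|a l1 IH]; simpl; [lra|]. unfold sumL in *. simpl. rewrite IH. lra. Qed.

Lemma sumL_perm f l1 l2 : Permutation l1 l2 -> sumL f l1 = sumL f l2.
Proof. intros H. induction H; unfold sumL in *; simpl; lra. Qed.

Lemma sumL_filter f (g : nat -> bool) l :
  sumL f l = sumL f (filter g l) + sumL f (filter (fun x => negb (g x)) l).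
Proof.
  induction l as [|a l IH]; unfold sumL in *; simpl; [lra|].
  destruct (g a); simpl; lra.
Qed.

Lemma sumL_le f g l : (forall x, In x l -> f x <= g x) -> sumL f l <= sumL g l.
Proof.
  induction l as [|a l IH]; intros H; unfold sumL in *; simpl; [lra|].
  assert (f a <= g a) by (apply H; left; auto).
  assert (IHl := IH (fun x Hx => H x (or_intror Hx))). lra.
Qed.

Lemma sumL_const c l : sumL (fun _ => c) l = INR (length l) * c.
Proof. induction l as [|a l IH]; unfold sumL in *; simpl; [lra|]. rewrite IH. destruct (length l); simpl; lra. Qed.

Lemma sumL_nonneg f l : (forall x, In x l -> 0 <= f x) -> 0 <= sumL f l.
Proof.
  intros H. apply (Rle_trans _ (sumL (fun _ => 0) l)); [|apply sumL_le; auto].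
  rewrite sumL_const. lra.
Qed.

Lemma sumL_scal c f l : sumL (fun x => c * f x) l = c * sumL f l.
Proof. induction l as [|a l IH]; unfold sumL in *; simpl; [lra|]. rewrite IH. lra. Qed.

Lemma sumR_seq f st m : sumR m (fun k => f (st + k)%nat) = sumL f (seq st m).
Proof.
  induction m as [|m IH]; [reflexivity|].
  rewrite seq_S, sumL_app. simpl. rewrite IH. unfold sumL. simpl. lra.
Qed.

Lemma list_argmax (g : nat -> R) l : l <> [] -> exists k, In k l /\ forall x, In x l -> g x <= g k.
Proof.
  induction l as [|a l IH]; intros H; [congruence|].
  destruct l as [|b l'].
  - exists a. split; [left; auto|]. intros x [->|[]]. lra.
  - destruct (IH ltac:(discriminate)) as [k [Hk Hmax]].
    destruct (Rle_dec (g a) (g k)).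
    + exists k. split; [right; auto|]. intros x [->|Hx]; [lra|auto].
    + exists a. split; [left; auto|]. intros x [->|Hx]; [lra|]. specialize (Hmax x Hx). lra.
Qed.

Definition memb (S : list nat) (x : nat) : bool := if in_dec Nat.eq_dec x S then true else false.

Lemma filter_memb_iff S l x : In x (filter (fun x => negb (memb S x)) l) <-> In x l /\ ~ In x S.
Proof.
  rewrite filter_In. unfold memb.
  destruct (in_dec Nat.eq_dec x S); simpl; split; intros [H1 H2]; auto; easy.
Qed.

Lemma top_exists (g : nat -> R) l m : NoDup l -> (m <= length l)%nat ->
  exists S, NoDup S /\ length S = m /\ incl S l /\
    (forall j k, In j S -> In k l -> ~ In k S -> g k <= g j).
Proof.
  intros Hnd. induction m as [|m IH]; intros Hm.
  - exists []. repeat split; [constructor|intros j []|intros j k []].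
  - destruct (IH ltac:(lia)) as [S [HS1 [HS2 [HS3 HS4]]]].
    set (Rest := filter (fun x => negb (memb S x)) l).
    assert (HRne : Rest <> []).
    { intros HR0. assert (Hincl : incl l S).
      { intros x Hx. destruct (in_dec Nat.eq_dec x S) as [|Hn]; auto. exfalso.
        assert (H : In x Rest) by (apply filter_memb_iff; auto). rewrite HR0 in H. auto. }
      assert (H := NoDup_incl_length Hnd Hincl). lia. }
    destruct (list_argmax g Rest HRne) as [k0 [Hk0 Hmax]].
    apply filter_memb_iff in Hk0. destruct Hk0 as [Hk0l Hk0S].
    exists (k0 :: S). split; [constructor; auto|]. split; [simpl; lia|]. split.
    + intros j [->|Hj]; auto.
    + intros j k [->|Hj] Hk HkS.
      * apply Hmax, filter_memb_iff. split; auto. intros Hc. apply HkS. right; auto.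
      * apply HS4; auto. intros Hc. apply HkS. right; auto.
Qed.

Lemma top_s_set_exists s p (v : nat -> R) : (s <= p)%nat -> exists S, top_s_set s p v S.
Proof.
  intros Hsp.
  destruct (top_exists (fun k => Rabs (v k)) (seq s (p - s)) (Nat.min s (p - s)) (seq_NoDup _ _)
    ltac:(rewrite length_seq; lia)) as [S [HS1 [HS2 [HS3 HS4]]]].
  exists S. split; [|split; [|split]]; auto.
  - intros j Hj. apply HS3, in_seq in Hj. lia.
  - intros j k Hj Hk HkS. apply HS4; auto. apply in_seq. lia.
Qed.

Lemma sumL_top_split (g v : nat -> R) s p S : top_s_set s p v S ->
  sumL g (seq s (p - s)) = sumL g S + sumL g (filter (fun x => negb (memb S x)) (seq s (p - s))).
Proof.
  intros [HS1 [_ [HS3 _]]].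
  rewrite (sumL_filter _ (memb S)). f_equal. apply sumL_perm.
  apply NoDup_Permutation; [apply NoDup_filter, seq_NoDup|auto|].
  intros x. rewrite filter_In, in_seq. unfold memb.
  destruct (in_dec Nat.eq_dec x S) as [Hx|Hx].
  - split; auto. intros _. specialize (HS3 x Hx). split; [lia|auto].
  - split; [intros [_ H]; discriminate|intros; contradiction].
Qed.

(* An entry outside the top-[s] set is dominated by each of the [s] entries in it. *)
Lemma top_s_complement_bound s p d S k : (1 <= s)%nat -> top_s_set s p d S ->
  (s <= k < p)%nat -> ~ In k S -> INR s * Rabs (d k) <= norm1_range s p d.
Proof.
  intros Hs HS Hk HkS. pose proof HS as [HS1 [HS2 [HS3 HS4]]].
  assert (HlenS : length S = s).
  { assert (Hinc : incl (k :: S) (seq s (p - s)))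
      by (intros x [<-|Hx]; apply in_seq; [|specialize (HS3 x Hx)]; lia).
    assert (H := NoDup_incl_length (NoDup_cons k HkS HS1) Hinc).
    simpl in H. rewrite length_seq in H. lia. }
  unfold norm1_range, sum_range. rewrite (sumR_seq (fun j => Rabs (d j))), (sumL_top_split _ d s p S HS).
  replace (INR s * Rabs (d k)) with (sumL (fun _ => Rabs (d k)) S)
    by (rewrite sumL_const, HlenS; ring).
  assert (sumL (fun _ => Rabs (d k)) S <= sumL (fun j => Rabs (d j)) S)
    by (apply sumL_le; intros j Hj; apply HS4; auto; lia).
  assert (0 <= sumL (fun j => Rabs (d j)) (filter (fun x => negb (memb S x)) (seq s (p - s))))
    by (apply sumL_nonneg; intros; apply Rabs_pos).
  lra.
Qed.

Lemma shifting_inequality s p d S : (1 <= s)%nat -> top_s_set s p d S ->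
  sum_range s p (fun j => d j ^ 2) <= sumsq_list d S + norm1_range s p d ^ 2 / INR s.
Proof.
  intros Hs HS.
  set (N2 := norm1_range s p d).
  set (B := filter (fun x => negb (memb S x)) (seq s (p - s))).
  assert (HsR : 0 < INR s) by (apply lt_0_INR; lia).
  assert (HN2 : 0 <= N2) by apply norm1_range_nonneg.
  assert (HB : sumL (fun j => d j ^ 2) B <= N2 / INR s * sumL (fun j => Rabs (d j)) B).
  { rewrite <- sumL_scal. apply sumL_le. intros x Hx. apply filter_memb_iff in Hx.
    destruct Hx as [Hx HxS]. apply in_seq in Hx.
    assert (H := top_s_complement_bound s p d S x Hs HS ltac:(lia) HxS).
    assert (Rabs (d x) <= N2 / INR s)
      by (apply (Rmult_le_reg_l (INR s)); [lra|]; fold N2 in H; field_simplify; lra).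
    rewrite <- (pow2_abs (d x)). assert (0 <= Rabs (d x)) by apply Rabs_pos. nra. }
  assert (HBN : sumL (fun j => Rabs (d j)) B <= N2).
  { unfold N2, norm1_range, sum_range.
    rewrite (sumR_seq (fun j => Rabs (d j))), (sumL_top_split _ d s p S HS).
    assert (0 <= sumL (fun j => Rabs (d j)) S) by (apply sumL_nonneg; intros; apply Rabs_pos).
    fold B. lra. }
  unfold sum_range. rewrite (sumR_seq (fun j => d j ^ 2)), (sumL_top_split _ d s p S HS). fold B.
  change (sumsq_list d S) with (sumL (fun j => d j ^ 2) S).
  assert (N2 / INR s * sumL (fun j => Rabs (d j)) B <= N2 / INR s * N2)
    by (apply Rmult_le_compat_l; [apply Rmult_le_pos; [lra|left; apply Rinv_0_lt_compat; lra]|auto]).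
  replace (N2 ^ 2 / INR s) with (N2 / INR s * N2) by (field; lra). lra.
Qed.

Lemma norm2_range_0 a b v : (forall k, (a <= k < b)%nat -> v k = 0) -> norm2_range a b v = 0.
Proof.
  intros H. unfold norm2_range, sum_range.
  rewrite (sumR_ext _ _ (fun _ => 0)), sumR_0, sqrt_0 by (intros; rewrite H by lia; ring).
  reflexivity.
Qed.

Lemma norm1_le_sqrt_card_norm2 s v : norm1_range 0 s v <= sqrt (INR s) * norm2_range 0 s v.
Proof.
  assert (Hcs := sumR_sq_le s (fun k => Rabs (v k))). cbv beta in Hcs.
  rewrite (sumR_ext s (fun k => Rabs (v k) ^ 2) (fun k => v k ^ 2)) in Hcs
    by (intros; apply pow2_abs).
  rewrite <- norm1_range_0 in Hcs.
  unfold norm2_range at 1, sum_range. rewrite Nat.sub_0_r, <- sqrt_mult_alt by apply pos_INR.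
  rewrite <- (sqrt_pow2 (norm1_range 0 s v)) by apply norm1_range_nonneg.
  apply sqrt_le_1_alt. exact Hcs.
Qed.

Lemma self_bounding kap c x Q : 0 < kap -> 0 <= x -> 0 <= c ->
  kap * x <= Q -> Q ^ 2 <= c * x -> x <= c / kap ^ 2 /\ Q <= c / kap.
Proof.
  intros Hk Hx Hc HxQ HQ.
  assert (Hx' : x <= c / kap ^ 2).
  { destruct (Req_dec x 0) as [->|Hx0]; [apply Rmult_le_pos; [lra|left; apply Rinv_0_lt_compat; nra]|].
    apply (Rmult_le_reg_l (kap ^ 2)); [nra|].
    replace (kap ^ 2 * (c / kap ^ 2)) with c by (field; lra).
    assert ((kap * x) ^ 2 <= Q ^ 2) by (apply pow_incr; split; [nra|lra]).
    apply (Rmult_le_reg_r x); [lra|]. nra. }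
  split; [exact Hx'|].
  apply Rsqr_incr_0_var; [|apply Rmult_le_pos; [lra|left; apply Rinv_0_lt_compat; lra]].
  unfold Rsqr. replace (c / kap * (c / kap)) with (c * (c / kap ^ 2)) by (field; lra).
  assert (c * x <= c * (c / kap ^ 2)) by (apply Rmult_le_compat_l; lra). nra.
Qed.

Lemma s_pos_of_kappa_glb n p s X kappa : is_glb_R (kappa_ratios n p s X) kappa -> (1 <= s)%nat.
Proof.
  intros [_ Hglb]. destruct s as [|s]; [exfalso|lia].
  assert (Hempty : forall r, ~ kappa_ratios n p 0 X r).
  { intros r [d [S [[j [Hj Hd]] [Hcone _]]]].
    unfold norm1_range, sum_range in Hcone. simpl in Hcone. rewrite Nat.sub_0_r in Hcone.
    assert (H := sumR_term_le p (fun k => Rabs (d (0 + k)%nat)) j ltac:(intros; apply Rabs_pos) Hj).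
    simpl in H. assert (0 < Rabs (d j)) by (apply Rabs_pos_lt; auto). lra. }
  assert (H := Hglb (kappa + 1) (fun x Hx => False_ind _ (Hempty x Hx))). lra.
Qed.

Lemma kappa_le_ratio n p s X kappa d S : 0 < kappa -> is_glb_R (kappa_ratios n p s X) kappa ->
  (exists j, (j < p)%nat /\ d j <> 0) -> norm1_range s p d <= 7 * norm1_range 0 s d ->
  top_s_set s p d S ->
  kappa * Rmax (norm2_range 0 s d) (sqrt (sumsq_list d S)) <=
  / sqrt (INR n) * sqrt (sumR n (fun i => Xmul p X d i ^ 2)).
Proof.
  intros Hk [Hlb _] Hnz Hcone HS.
  set (M := Rmax _ _). set (Q := / sqrt (INR n) * _).
  assert (HkQ : kappa <= Q / M) by (apply Hlb; exists d, S; auto).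
  (* [M = 0] would give the junk ratio [Q / 0 = 0], contradicting [kappa > 0]. *)
  assert (HM : 0 < M).
  { assert (0 <= M) by (apply (Rle_trans _ _ _ (sqrt_pos (sumsq_list d S))), Rmax_r).
    destruct (Req_dec M 0) as [H0|]; [|lra].
    rewrite H0 in HkQ. unfold Rdiv in HkQ. rewrite Rinv_0, Rmult_0_r in HkQ. lra. }
  apply (Rmult_le_compat_r M) in HkQ; [|lra].
  replace (Q / M * M) with Q in HkQ by (field; lra). exact HkQ.
Qed.

Lemma nonzero_or_zero (v : nat -> R) m :
  (exists j, (j < m)%nat /\ v j <> 0) \/ (forall j, (j < m)%nat -> v j = 0).
Proof.
  induction m as [|m [[j [Hj Hv]]|IH]]; [right; intros; lia|left; exists j; split; auto|].
  destruct (Req_dec (v m) 0) as [H0|H0]; [right|left; exists m; auto].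
  intros j Hj. destruct (Nat.eq_dec j m) as [->|]; auto. apply IH. lia.
Qed.

Lemma off_support_norm2_le s p d S : (1 <= s)%nat -> top_s_set s p d S ->
  norm1_range s p d <= 7 * norm1_range 0 s d ->
  norm2_range s p d <= sqrt (sumsq_list d S) + 7 * norm2_range 0 s d.
Proof.
  intros Hs HS Hcone.
  assert (HsR : 0 < INR s) by (apply lt_0_INR; lia).
  assert (HSS : 0 <= sumsq_list d S).
  { clear. induction S as [|a S IH]; simpl; [lra|]. assert (0 <= d a ^ 2) by apply pow2_ge_0. lra. }
  assert (HN2 := norm1_range_nonneg s p d).
  assert (HCS := norm1_le_sqrt_card_norm2 s d).
  assert (Hx := sqrt_pos (sum_range 0 s (fun j => d j ^ 2))). fold (norm2_range 0 s d) in Hx.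
  assert (Hsq := sqrt_sqrt (INR s) ltac:(lra)).
  unfold norm2_range at 1.
  eapply Rle_trans; [apply sqrt_le_1_alt, (shifting_inequality s p d S Hs HS)|].
  eapply Rle_trans; [apply sqrt_add_le; [auto|apply Rmult_le_pos; [apply pow2_ge_0|left; apply Rinv_0_lt_compat; lra]]|].
  apply Rplus_le_compat_l.
  rewrite <- (sqrt_pow2 (7 * norm2_range 0 s d)) by lra.
  apply sqrt_le_1_alt. apply (Rmult_le_reg_l (INR s)); [lra|].
  replace (INR s * (norm1_range s p d ^ 2 / INR s)) with (norm1_range s p d ^ 2) by (field; lra).
  assert (HCS2 : norm1_range 0 s d ^ 2 <= (sqrt (INR s) * norm2_range 0 s d) ^ 2)
    by (apply pow_incr; split; [apply norm1_range_nonneg|exact HCS]).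
  assert (norm1_range s p d ^ 2 <= (7 * norm1_range 0 s d) ^ 2) by (apply pow_incr; lra).
  rewrite <- Hsq. nra.
Qed.

Lemma l2_bounds_of_cone n p s X kappa lam0 delta :
  (0 < n)%nat -> (s <= p)%nat -> 0 < kappa -> is_glb_R (kappa_ratios n p s X) kappa -> 0 <= lam0 ->
  norm1_range s p delta <= 7 * norm1_range 0 s delta ->
  / INR n * sumR n (fun i => Xmul p X delta i ^ 2) <= 7 * lam0 * norm1_range 0 s delta ->
  norm2_range 0 s delta <= 7 * lam0 * sqrt (INR s) / kappa ^ 2 /\
  norm2_range s p delta <= 56 * lam0 * sqrt (INR s) / kappa ^ 2.
Proof.
  intros Hn Hsp Hk Hglb Hl0 Hcone Horacle.
  assert (Hs := s_pos_of_kappa_glb n p s X kappa Hglb).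
  set (c := 7 * lam0 * sqrt (INR s)).
  assert (Hc : 0 <= c) by (apply Rmult_le_pos; [lra|apply sqrt_pos]).
  assert (HcK : 0 <= c / kappa ^ 2) by (apply Rmult_le_pos; [lra|left; apply Rinv_0_lt_compat; nra]).
  replace (56 * lam0 * sqrt (INR s) / kappa ^ 2) with (8 * (c / kappa ^ 2)) by (unfold c; field; lra).
  destruct (nonzero_or_zero delta p) as [Hnz|Hz];
    [|rewrite !norm2_range_0 by (intros; apply Hz; lia); lra].
  destruct (top_s_set_exists s p delta Hsp) as [S HS].
  assert (HkQ := kappa_le_ratio n p s X kappa delta S Hk Hglb Hnz Hcone HS).
  set (x := norm2_range 0 s delta) in *. set (y2 := sqrt (sumsq_list delta S)) in *.
  set (SX := sumR n (fun i => Xmul p X delta i ^ 2)) in *.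
  set (Q := / sqrt (INR n) * sqrt SX) in *.
  assert (HnR : 0 < INR n) by (apply lt_0_INR; lia).
  assert (HQ2 : Q ^ 2 = / INR n * SX).
  { unfold Q. rewrite Rpow_mult_distr, pow_inv, !pow2_sqrt; [auto|apply sumR_sq_nonneg|lra]. }
  assert (Hx0 : 0 <= x) by apply sqrt_pos.
  assert (Hy0 : 0 <= y2) by apply sqrt_pos.
  assert (HN1 := norm1_le_sqrt_card_norm2 s delta). fold x in HN1.
  destruct (self_bounding kappa c x Q Hk Hx0 Hc) as [Hx HQ].
  - assert (kappa * x <= kappa * Rmax x y2) by (apply Rmult_le_compat_l; [lra|apply Rmax_l]). lra.
  - rewrite HQ2. unfold c. assert (0 <= 7 * lam0) by lra. nra.
  - split; [exact Hx|].
    assert (Hy : y2 <= c / kappa ^ 2).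
    { assert (kappa * y2 <= kappa * Rmax x y2) by (apply Rmult_le_compat_l; [lra|apply Rmax_r]).
      apply (Rmult_le_reg_l kappa); [lra|].
      replace (kappa * (c / kappa ^ 2)) with (c / kappa) by (field; lra). lra. }
    assert (H := off_support_norm2_le s p delta S Hs HS Hcone). fold x y2 in H. lra.
Qed.

Lemma lam0_pos_or_full_support n p s c lam0 : (0 < n)%nat -> (1 <= s <= p)%nat -> 0 < c ->
  lam0 = c * sqrt (ln (INR p) / INR n) -> 0 < lam0 \/ s = p.
Proof.
  intros Hn Hs Hc Hlam0. destruct (le_lt_dec 2 p) as [Hp2|Hp2]; [left|right; lia].
  rewrite Hlam0. apply Rmult_lt_0_compat; [lra|apply sqrt_lt_R0, Rdiv_lt_0_compat].
  - rewrite <- ln_1. apply ln_increasing; [lra|apply (lt_INR 1); lia].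
  - apply lt_0_INR. lia.
Qed.

Lemma l1_cone_of_cone_excess n p s X beta0 lam0 b : (0 < n)%nat -> 0 <= lam0 ->
  (0 < lam0 \/ s = p) -> cone_excess n p s X beta0 lam0 b <= 0 ->
  norm1_range s p (fun k => b k - beta0 k) <= 7 * norm1_range 0 s (fun k => b k - beta0 k).
Proof.
  intros Hn Hl0 [Hpos| ->] HF; unfold cone_excess in HF.
  - assert (0 <= / INR n * sumR n (fun i => Xmul p X (fun k => b k - beta0 k) i ^ 2))
      by (apply Rmult_le_pos; [left; apply Rinv_0_lt_compat, lt_0_INR; lia|apply sumR_sq_nonneg]).
    apply (Rmult_le_reg_l lam0); [exact Hpos|]. nra.
  - unfold norm1_range at 1, sum_range. rewrite Nat.sub_diag.
    simpl. apply Rmult_le_pos; [lra|apply norm1_range_nonneg].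
Qed.

Theorem mainTheorem7
  (n p s : nat) (X : nat -> nat -> R) (y eps beta0 : nat -> R)
  (c lam lam0 c1 kappa0 kappa pinf : R) (pl dp d2p : R -> R) (betahat : nat -> R)
  (Hn : (0 < n)%nat) (Hp : (0 < p)%nat) (Hsp : (s <= p)%nat)
  (Hcol : forall j, (j < p)%nat -> sqrt (sumR n (fun i => X i j ^ 2)) = sqrt (INR n))
  (Hmodel : forall i, (i < n)%nat -> y i = Xmul p X beta0 i + eps i)
  (Hsupp1 : forall j, (j < s)%nat -> beta0 j <> 0)
  (Hsupp2 : forall j, (s <= j < p)%nat -> beta0 j = 0)
  (Hc : 0 < c) (Hlam0 : lam0 = c * sqrt (ln (INR p) / INR n))
  (Hlam : 0 < lam)
  (Hpl0 : pl 0 = 0) (Hplnn : forall t, 0 <= t -> 0 <= pl t)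
  (Hpinf : forall e, 0 < e -> exists M, forall t, M <= t -> Rabs (pl t - pinf) < e)
  (Hdp : forall t, 0 < t -> derivable_pt_lim pl t (dp t))
  (Hdpc : forall t, 0 < t -> continuity_pt dp t)
  (Hkappa0 : 0 < kappa0)
  (HRE : forall d : nat -> R, sqrt (sumR p (fun j => d j ^ 2)) = 1 -> (norm0 p d < 2 * s)%nat ->
           kappa0 <= / sqrt (INR n) * sqrt (sumR n (fun i => Xmul p X d i ^ 2)))
  (Hkappa : is_glb_R (kappa_ratios n p s X) kappa) (Hkappapos : 0 < kappa)
  (Hc1 : 0 <= c1 < 1)
  (Hincr : forall a b, 0 <= a -> a <= b -> pl a <= pl b)
  (Hconc : forall a b t, 0 <= a -> 0 <= b -> 0 <= t <= 1 ->
             t * pl a + (1 - t) * pl b <= pl (t * a + (1 - t) * b))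
  (Hlow : forall t, 0 <= t <= lam -> pl t >= / 2 * (lam ^ 2 - (Rmax (lam - t) 0) ^ 2))
  (Hdp1 : dp ((1 - c1) * lam) <= c1 * lam)
  (Hd2p : forall t, 0 < t <= (1 - c1) * lam -> derivable_pt_lim dp t (d2p t))
  (Hd2pdec : forall a b, 0 < a -> a <= b -> b <= (1 - c1) * lam -> - d2p b <= - d2p a)
  (Hdp2 : dp ((1 - c1) * lam) <= lam0 / 4)
  (Hbmin : forall j, (j < s)%nat ->
             Rabs (beta0 j) > Rmax ((1 - c1) * lam) (2 * / kappa0 * sqrt pinf))
  (Hmin : forall b : nat -> R, objL n p X y lam0 pl betahat <= objL n p X y lam0 pl b)
  (HE : forall j, (j < p)%nat -> Rabs (/ INR n * XTmul n X eps j) <= lam0 / 2) :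
  let delta := fun j => betahat j - beta0 j in
  / INR n * sumR n (fun i => Xmul p X delta i ^ 2) + lam0 * norm1_range s p delta
    <= 7 * lam0 * norm1_range 0 s delta
  /\ norm1_range s p delta <= 7 * norm1_range 0 s delta
  /\ norm2_range 0 s delta <= 7 * lam0 * sqrt (INR s) / kappa ^ 2
  /\ norm2_range s p delta <= 56 * lam0 * sqrt (INR s) / kappa ^ 2.
Proof.
  intros delta.
  assert (HcolS : forall j, (j < p)%nat -> sumR n (fun i => X i j ^ 2) = INR n)
    by (intros j Hj; apply sqrt_inj; [apply sumR_sq_nonneg|apply pos_INR|auto]).
  assert (Hl0 : 0 <= lam0) by (rewrite Hlam0; apply Rmult_le_pos; [lra|apply sqrt_pos]).
  assert (Hs := s_pos_of_kappa_glb n p s X kappa Hkappa).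
  assert (HF := minimizer_cone_excess_nonpos n p s X y eps beta0 lam0 pl dp d2p lam c1 kappa0 pinf
    Hn Hsp HcolS Hmodel Hsupp2 Hl0 Hlam Hpl0 Hplnn Hpinf Hdp Hkappa0 HRE Hc1 Hincr Hconc Hlow
    Hdp1 Hd2p Hd2pdec Hdp2 Hbmin HE betahat Hmin).
  assert (Hcone := l1_cone_of_cone_excess n p s X beta0 lam0 betahat Hn Hl0
    (lam0_pos_or_full_support n p s c lam0 Hn ltac:(lia) Hc Hlam0) HF).
  unfold cone_excess in HF. fold delta in HF, Hcone.
  assert (0 <= lam0 * norm1_range s p delta)
    by (apply Rmult_le_pos; [lra|apply norm1_range_nonneg]).
  split; [lra|]. split; [exact Hcone|].
  apply (l2_bounds_of_cone n p s X kappa lam0 delta); auto; lra.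
Qed.
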